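(* Let $\mathcal N$ be a class of phylogenetic networks on a set $S$ of taxa such that for all $N_1,N_2\in\mathcal N$, $d_\mu(N_1,N_2)=0$ implies $N_1\cong N_2$. Then for all $N_1,N_2\in\mathcal N$, $m(N_1,N_2)=0$ implies $N_1\cong N_2$.
   Context: A phylogenetic network on $S=\{1,\dots,n\}$ is a finite rooted directed acyclic graph whose leaves are bijectively labeled by $S$; $\cong$ is digraph isomorphism preserving leaf labels. For a node $v$, $\mu(v)=(m_1(v),\dots,m_n(v))$ where $m_i(v)$ is the number of directed paths from $v$ to leaf $i$; $\mu(N)$ is the multiset of $\mu(v)$ over all nodes, and $d_\mu(N_1,N_2)=\frac12|\mu(N_1)\bigtriangleup\mu(N_2)|$. The nested label $\ell(v)$ is defined by induction on height: $\ell(v)=\{i\}$ for the leaf labeled $i$, otherwise the multiset of nested labels of the children of $v$; $\Upsilon(N)$ is the multiset of nested labels of all nodes, and $m(N_1,N_2)=\frac12|\Upsilon(N_1)\bigtriangleup\Upsilon(N_2)|$. Here $\bigtriangleup$ is multiset symmetric difference (multiplicity $|M_1(x)-M_2(x)|$) and $|\cdot|$ is the sum of multiplicities. *)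

From mathcomp Require Import all_boot all_algebra.
Set Implicit Arguments. Unset Strict Implicit. Unset Printing Implicit Defensive.

Definition is_leaf (V : finType) (E : rel V) (v : V) : bool := [forall w, ~~ E v w].

Definition acyclic (V : finType) (E : rel V) : Prop :=
  forall x y, E x y -> ~~ connect E y x.

Definition rooted (V : finType) (E : rel V) : Prop :=
  exists r, forall v, connect E r v.

Record network (n : nat) := Network {
  nV : finType;
  nE : rel nV;
  nlab : 'I_n -> nV;
  n_acyclic : acyclic nE;
  n_rooted : rooted nE;
  n_lab_inj : injective nlab;
  n_lab_leaves : forall v, is_leaf nE v = (v \in codom nlab)
}.
Arguments nV {n}.
Arguments nE {n}.
Arguments nlab {n}.

Definition iso n (N1 N2 : network n) : Prop :=
  exists f : nV N1 -> nV N2,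
    [/\ bijective f,
        forall x y, nE N2 (f x) (f y) = nE N1 x y
      & forall i, f (nlab N1 i) = nlab N2 i].

Definition msymdiff (T : eqType) (s1 s2 : seq T) : nat :=
  \sum_(x <- undup (s1 ++ s2))
     ((count_mem x s1 - count_mem x s2) + (count_mem x s2 - count_mem x s1)).

Definition half_symdiff (T : eqType) (s1 s2 : seq T) : rat :=
  ((msymdiff s1 s2)%:R / 2)%R.

(* number of directed paths from v to w: a path v = x0 -> x1 -> ... -> xk = w
   is encoded by the tuple (x1,...,xk); in an acyclic graph k < #|V|. *)
Definition npaths (V : finType) (E : rel V) (v w : V) : nat :=
  \sum_(k < #|V|) #|[set p : k.-tuple V | path E v p && (last v p == w)]|.

Definition mu_vec n (N : network n) (v : nV N) : {ffun 'I_n -> nat} :=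
  [ffun i => npaths (nE N) v (nlab N i)].

Definition mu_rep n (N : network n) : seq {ffun 'I_n -> nat} :=
  [seq mu_vec v | v <- enum (nV N)].

Definition d_mu n (N1 N2 : network n) : rat := half_symdiff (mu_rep N1) (mu_rep N2).

(* Nested labels are finite nested multisets.  They are encoded in
   GenTree.tree nat: the leaf label {i} is [GenTree.Leaf i], and a multiset
   of nested labels is [GenTree.Node 0 s] with s listed in the canonical
   order given by the injective code [pickle], so that two encodings are
   equal iff the multisets are equal. *)
Definition nlabel := GenTree.tree nat.

Definition nl_le (a b : nlabel) : bool := (pickle a <= pickle b)%N.

Definition nl_multiset (s : seq nlabel) : nlabel := GenTree.Node 0 (sort nl_le s).

Definition leaf_index n (N : network n) (v : nV N) : nat :=
  if [pick i | nlab N i == v] is Some i then nat_of_ord i else 0.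

Fixpoint nested_label_fuel n (N : network n) (k : nat) (v : nV N) : nlabel :=
  match k with
  | 0 => GenTree.Node 0 [::]
  | k'.+1 =>
      if is_leaf (nE N) v then GenTree.Leaf (leaf_index v)
      else nl_multiset [seq nested_label_fuel k' w | w <- enum (nE N v)]
  end.

(* the height of any node is < #|V|, so this fuel suffices *)
Definition nested_label n (N : network n) (v : nV N) : nlabel :=
  @nested_label_fuel n N #|nV N| v.

Definition Upsilon n (N : network n) : seq nlabel :=
  [seq nested_label v | v <- enum (nV N)].

Definition m_dist n (N1 N2 : network n) : rat := half_symdiff (Upsilon N1) (Upsilon N2).

From mathcomp Require Import all_boot all_algebra.
Set Implicit Arguments. Unset Strict Implicit. Unset Printing Implicit Defensive.
Import GRing.Theory Num.Theory.

(* The mu-vector of a node is a function of its nested label: the number of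
   paths from v to leaf i equals the number of occurrences of the leaf {i}
   in the (unfolded) nested label of v, since both satisfy the same recursion
   over the children of v.  Hence equal multisets of nested labels yield equal
   multisets of mu-vectors, so m = 0 implies d_mu = 0. *)

Section PathCount.
Variables (V : finType) (E : rel V).

Definition npaths_of_length k (v w : V) : nat :=
  #|[set p : k.-tuple V | path E v p && (last v p == w)]|.

Lemma npaths_of_length0 v w : npaths_of_length 0 v w = (v == w).
Proof.
rewrite /npaths_of_length -sum1dep_card.
have [<-|neq_vw] := eqVneq v w.
  rewrite (bigD1 [tuple]) //= big1 // => p /andP[_ p_nil].
  by case/negP: p_nil; rewrite (tuple0 p).
by rewrite big_pred0 // => p; rewrite tuple0 /= (negbTE neq_vw).
Qed.

Lemma npaths_of_lengthS k v w :
  npaths_of_length k.+1 v w = \sum_(c <- enum (E v)) npaths_of_length k c w.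
Proof.
rewrite /npaths_of_length -sum1dep_card big_enum /=.
pose cons_tuple (x : V * k.-tuple V) := [tuple of x.1 :: x.2].
have cons_bij : bijective cons_tuple.
  exists (fun p : k.+1.-tuple V => (thead p, [tuple of behead p])).
    by case=> c q; rewrite /cons_tuple /= theadE; congr pair; apply: val_inj.
  by move=> p; apply: val_inj; rewrite /= [in RHS](tuple_eta p).
rewrite (reindex cons_tuple) /=; last exact: onW_bij.
transitivity
  (\sum_(c | E v c) \sum_(q : k.-tuple V | path E c q && (last c q == w)) 1).
  by rewrite pair_big_dep /=; apply: eq_bigl => -[c q] /=; rewrite andbA.
by apply: eq_bigr => c _; rewrite sum1dep_card.
Qed.

Hypothesis E_acyclic : acyclic E.

Lemma acyclic_path_uniq v p : path E v p -> uniq (v :: p).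
Proof.
elim: p v => [//|y p IHp] v /= /andP[Evy y_p].
have /= /andP[-> ->] := IHp y y_p; rewrite !andbT.
apply/negP => v_in_p.
by have := E_acyclic Evy; rewrite (path_connect y_p v_in_p).
Qed.

Lemma npaths_of_length_card v w : npaths_of_length #|V| v w = 0.
Proof.
apply/eqP; rewrite cards_eq0; apply/eqP/setP => p; rewrite !inE.
apply/negP => /andP[/acyclic_path_uniq/card_uniqP uniq_vp _].
by have := max_card (mem (v :: p)); rewrite uniq_vp /= size_tuple ltnn.
Qed.

End PathCount.

Fixpoint leaf_count (i : nat) (t : nlabel) : nat :=
  match t with
  | GenTree.Leaf j => j == i
  | GenTree.Node _ s => sumn (map (leaf_count i) s)
  end.

Section NestedLabel.
Variables (n : nat) (N : network n).

Lemma is_leaf_nlab i : is_leaf (nE N) (nlab N i).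
Proof. by rewrite n_lab_leaves codom_f. Qed.

Lemma leaf_index_nlab i : leaf_index (nlab N i) = i.
Proof.
rewrite /leaf_index; case: pickP => [j /eqP/n_lab_inj -> //|no_label].
by have := no_label i; rewrite eqxx.
Qed.

(* Absence of paths of length k means k bounds the height of v, so the fuel
   of nested_label_fuel never runs out. *)
Lemma leaf_count_nested_label_fuel k (v : nV N) :
  (forall w, npaths_of_length (nE N) k v w = 0) ->
  forall i : 'I_n, leaf_count i (nested_label_fuel k v) =
    \sum_(j < k) npaths_of_length (nE N) j v (nlab N i).
Proof.
elim: k v => [|k IHk] v no_long_paths i.
  by have := no_long_paths v; rewrite npaths_of_length0 eqxx.
rewrite big_ord_recl npaths_of_length0 /=; case: ifP => v_leaf.
  have /codomP[j v_lab] : v \in codom (nlab N) by rewrite -n_lab_leaves.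
  subst v; rewrite leaf_index_nlab (inj_eq (@n_lab_inj _ N)).
  rewrite big1 ?addn0 // => l _.
  rewrite npaths_of_lengthS big_enum big_pred0 // => c.
  by move/forallP: v_leaf => /(_ c) /negbTE.
have -> : (v == nlab N i) = false.
  by apply/negP => /eqP v_lab; rewrite v_lab is_leaf_nlab in v_leaf.
rewrite add0n /nl_multiset /=.
rewrite (perm_sumn (perm_map _ (permEl (perm_sort _ _)))) -map_comp sumnE big_map.
under [RHS]eq_bigr do rewrite npaths_of_lengthS.
rewrite [RHS]exchange_big /=; apply: eq_big_seq => c; rewrite mem_enum => Evc.
apply: IHk => w; apply/eqP; rewrite -leqn0.
move: (no_long_paths w); rewrite npaths_of_lengthS big_enum (bigD1 c) //=.
by move/eqP; rewrite addn_eq0 => /andP[/eqP -> _].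
Qed.

Lemma mu_vecE (v : nV N) :
  mu_vec v = [ffun i : 'I_n => leaf_count i (nested_label v)].
Proof.
apply/ffunP => i; rewrite !ffunE /nested_label leaf_count_nested_label_fuel //.
by move=> w; apply/npaths_of_length_card/n_acyclic.
Qed.

Lemma mu_repE :
  mu_rep N = [seq [ffun i : 'I_n => leaf_count i t] | t <- Upsilon N].
Proof. by rewrite /mu_rep /Upsilon -map_comp; apply: eq_map => v; apply: mu_vecE. Qed.

End NestedLabel.

Lemma msymdiff_eq0 (T : eqType) (s1 s2 : seq T) :
  (msymdiff s1 s2 == 0) = perm_eq s1 s2.
Proof.
rewrite /msymdiff sum_nat_seq_eq0; apply/allP/allP => /= [eq_counts x s12x|].
  have := eq_counts x; rewrite mem_undup => /(_ s12x).
  by rewrite addn_eq0 !subn_eq0 eqn_leq.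
by move=> eq_counts x; rewrite mem_undup => /eq_counts /eqP ->; rewrite subnn.
Qed.

Lemma half_symdiff_eq0 (T : eqType) (s1 s2 : seq T) :
  (half_symdiff s1 s2 == 0%R) = perm_eq s1 s2.
Proof.
by rewrite /half_symdiff mulf_eq0 invr_eq0 pnatr_eq0 orbF msymdiff_eq0.
Qed.

Lemma d_mu_eq0_of_m_dist_eq0 n (N1 N2 : network n) :
  m_dist N1 N2 = 0%R -> d_mu N1 N2 = 0%R.
Proof.
move/eqP; rewrite half_symdiff_eq0 => perm_Upsilon.
by apply/eqP; rewrite half_symdiff_eq0 !mu_repE perm_map.
Qed.

Theorem corollary2 (n : nat) (C : network n -> Prop) :
  (forall N1 N2 : network n, C N1 -> C N2 -> d_mu N1 N2 = 0%R -> iso N1 N2) ->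
  forall N1 N2 : network n, C N1 -> C N2 -> m_dist N1 N2 = 0%R -> iso N1 N2.
Proof.
move=> d_mu_separates N1 N2 CN1 CN2 /d_mu_eq0_of_m_dist_eq0.
exact: d_mu_separates.
Qed.
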